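(* Let $G_1$ and $G_2$ be vertex-disjoint graphs. Then the join $G_1+G_2$ is $3$-$\gamma_{\rm tg}$-critical if and only if for each $i\in\{1,2\}$ one of the following holds: (a) $G_i$ is $3$-$\gamma_{\rm tg}$-critical; (b) $G_i \cong K_1 \cup K_k$ (disjoint union of an isolated vertex and a complete graph) for some $k\ge 2$.
   Context: The join $G_1+G_2$ is obtained from the disjoint union $G_1\cup G_2$ by adding all edges between $V(G_1)$ and $V(G_2)$. Total domination game on a graph without isolated vertices: Dominator and Staller alternately choose vertices, each chosen vertex must be adjacent to some vertex not yet totally dominated; the game ends when no legal move exists; Dominator minimizes, Staller maximizes the number of moves; $\gamma_{\rm tg}(G)$ is the number of moves in the Dominator-start game under optimal play. $G|v$ is $G$ with $v$ declared already totally dominated, with $\gamma_{\rm tg}(G|v)$ defined analogously. $G$ is $3$-$\gamma_{\rm tg}$-critical if $\gamma_{\rm tg}(G)=3$ and $\gamma_{\rm tg}(G|v)<3$ for every vertex $v$. *)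

From mathcomp Require Import all_boot.
Set Implicit Arguments. Unset Strict Implicit. Unset Printing Implicit Defensive.

(* A (finite simple) graph is a finType T with a symmetric irreflexive
   adjacency relation e : rel T. *)

Section TotalDominationGame.
Variables (T : finType) (e : rel T).

Definition nbhd (u : T) : {set T} := [set w | e u w].

(* S = set of vertices already totally dominated; u is a legal move iff
   u is adjacent to some vertex not yet totally dominated. *)
Definition legal (S : {set T}) (u : T) : bool := [exists w, e u w && (w \notin S)].

(* Value of the game from state S, with [dom] telling whether Dominator
   is to move (Dominator minimizes, Staller maximizes the number of
   remaining moves).  [n] is fuel; each move strictly enlarges S, so
   fuel #|T|.+1 suffices. *)
Fixpoint gval (n : nat) (S : {set T}) (dom : bool) : nat :=
  match n with
  | 0 => 0
  | n'.+1 =>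
    let moves := [seq u <- enum T | legal S u] in
    if moves is [::] then 0 else
    let vals := [seq gval n' (S :|: nbhd u) (~~ dom) | u <- moves] in
    (if dom then foldr minn (head 0 vals) vals else foldr maxn 0 vals).+1
  end.

Definition gamma_tg : nat := gval #|T|.+1 set0 true.

Definition gamma_tg_v (v : T) : nat := gval #|T|.+1 [set v] true.

Definition no_isolated : Prop := forall x : T, exists y, e x y.

Definition crit3 : Prop :=
  no_isolated /\ gamma_tg = 3 /\ forall v : T, (gamma_tg_v v < 3)%N.

End TotalDominationGame.

Definition join_rel (T1 T2 : finType) (e1 : rel T1) (e2 : rel T2) : rel (T1 + T2) :=
  fun x y =>
    match x, y with
    | inl a, inl b => e1 a b
    | inr a, inr b => e2 a b
    | _, _ => true
    end.

Definition graph_iso (T T' : finType) (e : rel T) (e' : rel T') : Prop :=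
  exists f : T -> T', bijective f /\ forall x y, e' (f x) (f y) = e x y.

Definition K1_Kk_rel (k : nat) : rel 'I_k.+1 :=
  fun i j => [&& i != j, i != ord0 & j != ord0].
Arguments K1_Kk_rel k : clear implicits.

Definition is_K1_Kk (T : finType) (e : rel T) : Prop :=
  exists k, (2 <= k)%N /\ graph_iso e (K1_Kk_rel k).

(* Dominator can end the game from a position S within two moves iff some
   vertex a is a two-move win at S: after a, every legal reply of Staller
   leaves no vertex undominated.  So a graph without isolated vertices and
   with game number at most 3 is 3-critical iff there is no two-move win at
   the empty position but there is one at every position [set v].
   In G1 + G2 a vertex of one factor dominates the whole other factor, so the
   two-move wins of the join are exactly those of its factors; the condition
   splits over G1 and G2, and the join never needs more than three moves.
   For a factor satisfying the condition, either there is no isolated vertex,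
   and then the game number is at most 3, so the factor is 3-critical; or
   there is an isolated vertex a, and then the two-move wins at the positions
   [set v] force a to be the only isolated vertex and all other vertices to
   be pairwise adjacent: the factor is the disjoint union of K_1 and K_k. *)

From mathcomp Require Import all_boot.
From mathcomp Require Import perm.
Set Implicit Arguments. Unset Strict Implicit. Unset Printing Implicit Defensive.

Lemma foldr_minn_leq (h k : nat) (s : seq nat) :
  (foldr minn h s <= k) = (h <= k) || has (leq^~ k) s.
Proof. by elim: s => [|x s IH] /=; rewrite ?orbF // geq_min IH orbCA. Qed.

Lemma foldr_maxn0_leq (k : nat) (s : seq nat) :
  (foldr maxn 0 s <= k) = all (leq^~ k) s.
Proof. by elim: s => [|x s IH] //=; rewrite geq_max IH. Qed.

Section GameValue.
Variables (T : finType) (e : rel T).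

Lemma mem_legal_moves S u : (u \in [seq u <- enum T | legal e S u]) = legal e S u.
Proof. by rewrite mem_filter mem_enum andbT. Qed.

Lemma gval_le_fuel n S d : gval e n S d <= n.
Proof.
elim: n S d => [|n IH] S d //=.
case: [seq u <- enum T | legal e S u] => [|u us] //=; rewrite ltnS; case: d => /=.
  by rewrite geq_min IH.
by rewrite geq_max IH foldr_maxn0_leq; apply/allP => _ /mapP [w _ ->].
Qed.

Lemma gvalS_eq0 n S d : gval e n.+1 S d = 0 <-> forall u, ~~ legal e S u.
Proof.
rewrite /=; case E: [seq u <- enum T | legal e S u] => [|u us].
  by split=> // _ u; rewrite -mem_legal_moves E.
by split=> // /(_ u); rewrite -mem_legal_moves E mem_head.
Qed.

Lemma gvalS_dom_le n S k :
  gval e n.+1 S true <= k.+1 <->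
  (forall u, ~~ legal e S u) \/
  exists2 u, legal e S u & gval e n (S :|: nbhd e u) false <= k.
Proof.
rewrite /=; case E: [seq u <- enum T | legal e S u] => [|u us] /=.
  by split=> // _; left=> u; rewrite -mem_legal_moves E.
rewrite ltnS geq_min foldr_minn_leq orbA orbb.
rewrite -[_ || _]/(has (leq^~ k) [seq gval e n (S :|: nbhd e w) false | w <- u :: us]).
rewrite -E has_map; split=> [/hasP [w] | [/(_ u) | [w Lw Hw]]].
- by rewrite mem_legal_moves => Lw Hw; right; exists w.
- by rewrite -mem_legal_moves E mem_head.
- by apply/hasP; exists w; rewrite ?mem_legal_moves.
Qed.

Lemma gvalS_stall_le n S k :
  gval e n.+1 S false <= k.+1 <->
  forall u, legal e S u -> gval e n (S :|: nbhd e u) true <= k.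
Proof.
rewrite /=; case E: [seq u <- enum T | legal e S u] => [|u us] /=.
  by split=> // _ w; rewrite -mem_legal_moves E.
rewrite ltnS -[maxn _ _]/(foldr maxn 0 [seq gval e n (S :|: nbhd e w) true | w <- u :: us]).
rewrite foldr_maxn0_leq -E all_map; split=> [/allP H w Lw | H].
  by apply: H; rewrite mem_legal_moves.
by apply/allP => w; rewrite mem_legal_moves; apply: H.
Qed.

Lemma gval_le3 n S : 2 < n ->
  (exists2 x, legal e S x & forall y, legal e (S :|: nbhd e x) y ->
     exists z, forall w, [|| w \in S, e x w, e y w | e z w]) ->
  gval e n S true <= 3.
Proof.
case: n => [|[|[|[|n]]]] // _; first by rewrite gval_le_fuel.
case=> x Lx Hx; apply/gvalS_dom_le; right; exists x => //.
apply/gvalS_stall_le => y Ly; apply/gvalS_dom_le.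
have [z Hz] := Hx y Ly.
case Lz: (legal e (S :|: nbhd e x :|: nbhd e y) z).
  right; exists z => //; rewrite leqn0; apply/eqP/gvalS_eq0 => u.
  by apply/existsP => -[w]; rewrite !inE -!orbA Hz andbF.
left=> u; apply/existsP => -[w]; rewrite !inE -!orbA => /andP [_ Hw].
have ezw : e z w by move: Hw; case/or4P: (Hz w) => ->; rewrite ?orbT.
by move/existsP: Lz; apply; exists w; rewrite ezw !inE -!orbA.
Qed.

End GameValue.

Section TwoMoveWins.
Variables (T : finType) (e : rel T).

(* Opening with [a] at position [S], Dominator ends the game on Staller's reply. *)
Definition wins_in_two (S : {set T}) (a : T) : Prop :=
  forall c, (exists d, [&& e c d, d \notin S & ~~ e a d]) ->
  forall d, [|| d \in S, e a d | e c d].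

(* 3-criticality minus the absence of isolated vertices and the bound
   [gamma_tg e <= 3]; the graphs [K1_Kk_rel k] satisfy it as well. *)
Definition crit3_core : Prop :=
  (forall a, ~ wins_in_two set0 a) /\ (forall v, exists a, wins_in_two [set v] a).

Lemma wins_in_two_set1_adj v a : wins_in_two [set v] a -> e a v -> wins_in_two set0 a.
Proof.
move=> Wa eav c [d /and3P [ecd _ nad]] d'.
have dv : d != v by apply: contraNneq nad => ->.
have /(Wa c) : exists d, [&& e c d, d \notin [set v] & ~~ e a d].
  by exists d; rewrite inE ecd dv.
by move=> /(_ d'); rewrite !inE; case: eqP => [->|]; rewrite ?eav.
Qed.

Hypotheses (esym : symmetric e) (noiso : no_isolated e).

Lemma no_legal_move_iff (S : {set T}) : (forall u, ~~ legal e S u) <-> forall w, w \in S.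
Proof.
split=> [H w | H u].
  apply: contraT => Sw; have [y ewy] := noiso w.
  by rewrite -(negbTE (H y)); apply/existsP; exists w; rewrite esym ewy.
by apply/existsP => -[w]; rewrite H andbF.
Qed.

Lemma wins_in_two_legal (S : {set T}) z a : z \notin S -> wins_in_two S a ->
  exists2 x, legal e S x & wins_in_two S x.
Proof.
move=> zS Wa; case La: (legal e S a); first by exists a.
have aS w : e a w -> w \in S.
  by move=> eaw; apply: contraFT La => wS; apply/existsP; exists w; rewrite eaw.
have [y ezy] := noiso z; have eyz : e y z by rewrite esym.
exists y; first by apply/existsP; exists z; rewrite eyz.
move=> c _ d; have /(Wa y) : exists d, [&& e y d, d \notin S & ~~ e a d].
  by exists z; rewrite eyz zS; apply: contra zS => /aS.
by move=> /(_ d) /or3P [-> | /aS -> | ->]; rewrite ?orbT.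
Qed.

Lemma gval_le2 n (S : {set T}) (a0 : T) :
  gval e n.+3 S true <= 2 <-> exists a, wins_in_two S a.
Proof.
split=> [/gvalS_dom_le [/no_legal_move_iff full | [x _]] | [a Wa]].
- by exists a0 => c _ d; rewrite full.
- move/gvalS_stall_le => Hx; exists x => c [d Hd] d'.
  have Lc : legal e (S :|: nbhd e x) c.
    by apply/existsP; exists d; rewrite !inE negb_or.
  move: (Hx c Lc); rewrite leqn0 => /eqP /gvalS_eq0 /no_legal_move_iff /(_ d').
  by rewrite !inE -orbA.
- case: (boolP [forall w, w \in S]) => [/forallP full | /forallPn [z zS]].
    by apply/gvalS_dom_le; left; apply/no_legal_move_iff.
  have [x Lx Wx] := wins_in_two_legal zS Wa.
  apply/gvalS_dom_le; right; exists x => //; apply/gvalS_stall_le => y /existsP [w].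
  rewrite !inE negb_or => Hw; rewrite leqn0; apply/eqP/gvalS_eq0/no_legal_move_iff.
  by move=> d; rewrite !inE -orbA; apply: Wx; exists w.
Qed.

End TwoMoveWins.

Section Crit3Core.
Variables (T : finType) (e : rel T).
Hypotheses (esym : symmetric e) (eirr : irreflexive e) (T_gt0 : 0 < #|T|).

Lemma no_isolated_card_gt1 : no_isolated e -> 1 < #|T|.
Proof.
move=> noiso; case/card_gt0P: T_gt0 => w _; have [y ewy] := noiso w.
apply/card_gt1P; exists w, y; split=> //.
by apply: contraTneq ewy => ->; rewrite eirr.
Qed.

Lemma crit3_iff_core : no_isolated e -> gamma_tg e <= 3 ->
  crit3 e <-> crit3_core e.
Proof.
move=> noiso; have := no_isolated_card_gt1 noiso.
case/card_gt0P: T_gt0 => a0 _; rewrite /crit3 /gamma_tg /gamma_tg_v.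
case: #|T| => [|[|n]] // _ le3; split=> [[_ [G3 Gv]] | [N0 Wv]].
- split=> [a Wa | v]; last exact/(gval_le2 esym noiso n _ a0)/Gv.
  suff : gval e n.+3 set0 true <= 2 by rewrite G3.
  by apply/(gval_le2 esym noiso n _ a0); exists a.
- split=> //; split=> [| v]; last exact/(gval_le2 esym noiso n _ a0)/Wv.
  apply/eqP; rewrite eqn_leq le3 ltnNge; apply/negP.
  by move=> /(gval_le2 esym noiso n _ a0) [a /N0].
Qed.

Lemma crit3_core_gamma_le3 : no_isolated e -> crit3_core e -> gamma_tg e <= 3.
Proof.
move=> noiso [N0 Wv]; apply: gval_le3; first exact: no_isolated_card_gt1.
have [v [a Wa]] : exists v, exists a, wins_in_two e [set v] a.
  by case/card_gt0P: T_gt0 => v _; exists v.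
have nav : ~~ e a v by apply/negP => /(wins_in_two_set1_adj Wa) /N0.
have cover c d w : e c d -> d != v -> ~~ e a d -> w != v -> e a w || e c w.
  move=> ecd dv nad wv.
  have /(Wa c) : exists d, [&& e c d, d \notin [set v] & ~~ e a d].
    by exists d; rewrite inE ecd dv.
  by move=> /(_ w); rewrite inE (negbTE wv).
(* If Staller's reply [y] has a neighbour other than [v] outside N(a), at most
   [v] is left undominated; otherwise [y] dominates [v], and what is left is
   dominated by a neighbour of any vertex outside N(a) other than [v]. *)
have [w0 eaw0] := noiso a; have [z0 evz0] := noiso v.
exists a; first by apply/existsP; exists w0; rewrite eaw0 inE.
move=> y /existsP [w1]; rewrite !inE /= => /andP [eyw1 naw1].
case: (eqVneq w1 v) => [w1v | w1v]; last first.
  exists z0 => w; case: (eqVneq w v) => [-> | wv]; first by rewrite (esym z0) evz0 !orbT.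
  by case/orP: (cover y w1 w eyw1 w1v naw1 wv) => ->; rewrite ?orbT.
case: (boolP [exists d, (d != v) && ~~ e a d]) => [/existsP [d /andP [dv nad]] | /existsPn allA].
  have [z edz] := noiso d; have ezd : e z d by rewrite esym.
  exists z => w.
  case: (eqVneq w v) => [-> | wv]; first by rewrite -w1v eyw1 !orbT.
  by case/orP: (cover z d w ezd dv nad wv) => ->; rewrite ?orbT.
exists a => w; case: (eqVneq w v) => [-> | wv]; first by rewrite -w1v eyw1 !orbT.
by move: (allA w); rewrite wv /= negbK => ->; rewrite !orbT.
Qed.

End Crit3Core.

Section IsolatedPlusClique.
Variables (T : finType) (e : rel T).

Definition isolated_plus_clique : Prop :=
  exists a, [/\ forall y, ~~ e a y,
    forall x y, x != y -> x != a -> y != a -> e x y &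
    exists c d, [/\ c != a, d != a & c != d]].

Lemma K1_Kk_isolated_plus_clique : is_K1_Kk e -> isolated_plus_clique.
Proof.
case=> k [k_ge2 [f [f_bij ef]]]; have f_inj := bij_inj f_bij.
case: f_bij => g fK gK; exists (g ord0); split.
- by move=> y; rewrite -ef gK /K1_Kk_rel eqxx andbF.
- by move=> x y xy xa ya; rewrite -ef /K1_Kk_rel (inj_eq f_inj) !(can2_eq fK gK) xy xa ya.
- have l1 : 1 < k.+1 by rewrite ltnS; apply: leq_trans k_ge2.
  by exists (g (Ordinal l1)), (g (Ordinal (k_ge2 : 2 < k.+1))); rewrite !(can_eq gK).
Qed.

Hypotheses (esym : symmetric e) (eirr : irreflexive e).

Lemma isolated_plus_clique_K1_Kk : isolated_plus_clique -> is_K1_Kk e.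
Proof.
case=> a [ia adj [c [d [ca da cd]]]].
have T_gt0 : 0 < #|T| by apply/card_gt0P; exists a.
pose k := #|T|.-1; have Tk : #|T| = k.+1 by rewrite prednK.
exists k; split.
  by rewrite -ltnS -Tk; apply/card_gt2P; exists a, c, d; rewrite eq_sym ca.
pose f (x : T) : 'I_k.+1 := cast_ord Tk (tperm (enum_rank a) (Ordinal T_gt0) (enum_rank x)).
have f_inj : injective f by move=> x y /cast_ord_inj /perm_inj /enum_rank_inj.
have f0 x : (f x == ord0) = (x == a).
  by rewrite -(inj_eq f_inj); congr (_ == _); apply: val_inj; rewrite /= tpermL.
exists f; split; first by apply: inj_card_bij; rewrite // card_ord Tk.
move=> x y; rewrite /K1_Kk_rel (inj_eq f_inj) !f0.
case: (eqVneq x a) => [->|xa]; first by rewrite (negbTE (ia y)) andbF.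
case: (eqVneq y a) => [->|ya]; first by rewrite esym (negbTE (ia x)) !andbF.
by case: (eqVneq x y) => [->|xy]; rewrite ?eirr ?adj.
Qed.

Lemma wins_in_two_set1_cover v x b c d : wins_in_two e [set v] x ->
  (forall y, ~~ e b y) -> b != v -> e c d -> (d == v) || e x d.
Proof.
move=> Wx ib bv ecd; apply: contraT; rewrite negb_or => /andP [dv nxd].
have /(Wx c) : exists d, [&& e c d, d \notin [set v] & ~~ e x d].
  by exists d; rewrite inE ecd dv.
by move=> /(_ b); rewrite inE (negbTE bv) (esym x) (esym c) !(negbTE (ib _)).
Qed.

Lemma crit3_core_set1_not_isolated v x b : crit3_core e -> wins_in_two e [set v] x ->
  (forall y, ~~ e b y) -> b != v -> exists y, e v y.
Proof.
move=> [N0 _] Wx ib bv; apply/existsP; apply: contraT => /existsPn iv; exfalso.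
apply: (N0 x) => c [d /and3P [ecd _ nxd]].
case/orP: (wins_in_two_set1_cover Wx ib bv ecd) => [/eqP dv | exd].
  by move: ecd; rewrite dv esym (negbTE (iv c)).
by rewrite exd in nxd.
Qed.

Lemma crit3_core_isolated_plus_clique :
  crit3_core e -> ~ no_isolated e -> isolated_plus_clique.
Proof.
move=> core noiso; have [N0 Wv] := core.
have /existsP [a /forallP ia] : [exists a, [forall y, ~~ e a y]].
  apply: contraT => /existsPn H; exfalso; apply: noiso => x.
  by have /forallPn [y] := H x; rewrite negbK; exists y.
have nonisolated t : t != a -> exists y, e t y.
  move=> ta; apply/existsP; apply: contraT => /existsPn it.
  have [x Wx] := Wv a; have [y eay] := crit3_core_set1_not_isolated core Wx it ta.
  by rewrite (negbTE (ia y)) in eay.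
exists a; split=> //.
- move=> u w uw ua wa; have [x Wx] := Wv u.
  have au : a != u by rewrite eq_sym.
  have cover t : t != a -> (t == u) || e x t.
    move=> /nonisolated [y ety].
    by apply: (wins_in_two_set1_cover (c := y) Wx ia au); rewrite esym.
  have [y euy] := nonisolated u ua.
  have ya : y != a by apply: contraTneq euy => ->; rewrite esym (negbTE (ia u)).
  have yu : y != u by apply: contraTneq euy => ->; rewrite eirr.
  have xa : x != a.
    by apply: contraTneq (cover y ya) => ->; rewrite (negbTE yu) (negbTE (ia y)).
  have /eqP xu : x == u by move: (cover x xa); rewrite eirr orbF.
  by move: (cover w wa); rewrite eq_sym (negbTE uw) -xu.
- have /existsP [c /existsP [d ecd]] : [exists c, [exists d, e c d]].
    apply: contraT => /existsPn H; exfalso; apply: (N0 a) => c [d /andP [ecd _]].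
    by move/existsPn: (H c) => /(_ d); rewrite ecd.
  exists c, d; split; apply: contraTneq ecd => ->; rewrite ?eirr //.
  by rewrite esym.
Qed.

Lemma isolated_plus_clique_crit3_core : isolated_plus_clique -> crit3_core e.
Proof.
case=> a [ia adj [c [d [ca da cd]]]].
have nea y : e y a = false by rewrite esym (negbTE (ia y)).
split=> [x Wx | v].
  case: (eqVneq x a) => [xa | xa].
    have /(Wx c) : exists d0, [&& e c d0, d0 \notin set0 & ~~ e x d0].
      by exists d; rewrite inE adj // xa ia.
    by move=> /(_ c); rewrite inE xa (negbTE (ia c)) eirr.
  have [c' c'x c'a] : exists2 c', c' != x & c' != a.
    by case: (eqVneq c x) => [<- | cx]; [exists d; rewrite // eq_sym | exists c].
  have /(Wx c') : exists d0, [&& e c' d0, d0 \notin set0 & ~~ e x d0].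
    by exists x; rewrite inE adj // eirr.
  by move=> /(_ a); rewrite inE !nea.
case: (eqVneq v a) => [-> | va].
  exists c => c0 [d0]; rewrite inE => /and3P [ec0d0 d0a ncd0] d1.
  have d0c : d0 = c by apply: contraNeq ncd0 => d0c; rewrite adj // eq_sym.
  case: (eqVneq d1 a) => [-> | d1a]; first by rewrite inE eqxx.
  case: (eqVneq d1 c) => [-> | d1c]; first by rewrite -d0c ec0d0 !orbT.
  by rewrite (adj c d1) ?orbT // eq_sym.
exists v => c0 [d0]; rewrite inE => /and3P [ec0d0 d0v nvd0].
have d0a : d0 != a by apply: contraTneq ec0d0 => ->; rewrite nea.
by move: nvd0; rewrite adj // eq_sym.
Qed.

Lemma crit3_core_iff : 0 < #|T| -> crit3_core e <-> crit3 e \/ is_K1_Kk e.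
Proof.
move=> T_gt0; split=> [core | [cr | /K1_Kk_isolated_plus_clique]].
- case: (boolP [forall x, [exists y, e x y]]) => [/forallP H | /forallPn [x /existsPn ix]].
    have noiso : no_isolated e by move=> x; apply/existsP.
    by left; apply/crit3_iff_core => //; apply: crit3_core_gamma_le3.
  right; apply/isolated_plus_clique_K1_Kk/crit3_core_isolated_plus_clique => // noiso.
  by have [y] := noiso x; rewrite (negbTE (ix y)).
- have [noiso [G3 _]] := cr.
  by apply/crit3_iff_core => //; rewrite G3.
- exact: isolated_plus_clique_crit3_core.
Qed.

End IsolatedPlusClique.

Section Join.
Variables (T1 T2 : finType) (e1 : rel T1) (e2 : rel T2).
Local Notation J := (join_rel e1 e2).

Lemma wins_in_two_join_inl S a :
  wins_in_two J S (inl a) <-> wins_in_two e1 (inl @^-1: S) a.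
Proof.
split=> Wa c [d Hd] d'.
  have /(Wa (inl c)) /(_ (inl d')) : exists w, [&& J (inl c) w, w \notin S & ~~ J (inl a) w].
    by exists (inl d); rewrite inE in Hd.
  by rewrite inE.
case: c d d' Hd => c [d|d] [d'|d'] //=; rewrite ?orbT ?andbF // => Hd.
have /(Wa c) /(_ d') : exists d, [&& e1 c d, d \notin inl @^-1: S & ~~ e1 a d].
  by exists d; rewrite inE.
by rewrite inE.
Qed.

Lemma wins_in_two_join_inr S b :
  wins_in_two J S (inr b) <-> wins_in_two e2 (inr @^-1: S) b.
Proof.
split=> Wb c [d Hd] d'.
  have /(Wb (inr c)) /(_ (inr d')) : exists w, [&& J (inr c) w, w \notin S & ~~ J (inr b) w].
    by exists (inr d); rewrite inE in Hd.
  by rewrite inE.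
case: c d d' Hd => c [d|d] [d'|d'] //=; rewrite ?orbT ?andbF // => Hd.
have /(Wb c) /(_ d') : exists d, [&& e2 c d, d \notin inr @^-1: S & ~~ e2 b d].
  by exists d; rewrite inE.
by rewrite inE.
Qed.

Lemma crit3_core_join : crit3_core J <-> crit3_core e1 /\ crit3_core e2.
Proof.
have preim_inl v : inl @^-1: [set inl v] = [set v] :> {set T1} by apply/setP => x; rewrite !inE.
have preim_inr v : inr @^-1: [set inr v] = [set v] :> {set T2} by apply/setP => x; rewrite !inE.
have preim_inl0 v : inl @^-1: [set inr v] = set0 :> {set T1} by apply/setP => x; rewrite !inE.
have preim_inr0 v : inr @^-1: [set inl v] = set0 :> {set T2} by apply/setP => x; rewrite !inE.
split=> [[N0 Wv] | [[N1 W1] [N2 W2]]].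
- have N1 a : ~ wins_in_two e1 set0 a.
    by move=> W; apply: (N0 (inl a)); apply/wins_in_two_join_inl; rewrite preimset0.
  have N2 b : ~ wins_in_two e2 set0 b.
    by move=> W; apply: (N0 (inr b)); apply/wins_in_two_join_inr; rewrite preimset0.
  split; split=> // v.
    case: (Wv (inl v)) => -[a /wins_in_two_join_inl | b /wins_in_two_join_inr].
      by rewrite preim_inl; exists a.
    by rewrite preim_inr0 => /N2.
  case: (Wv (inr v)) => -[a /wins_in_two_join_inl | b /wins_in_two_join_inr].
    by rewrite preim_inl0 => /N1.
  by rewrite preim_inr; exists b.
- split=> [[a /wins_in_two_join_inl | b /wins_in_two_join_inr] | [v | v]]; rewrite ?preimset0.
  + exact: N1.
  + exact: N2.
  + by have [a W] := W1 v; exists (inl a); apply/wins_in_two_join_inl; rewrite preim_inl.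
  + by have [b W] := W2 v; exists (inr b); apply/wins_in_two_join_inr; rewrite preim_inr.
Qed.

Lemma join_sym : symmetric e1 -> symmetric e2 -> symmetric J.
Proof. by move=> s1 s2 [a|a] [b|b] //=. Qed.

Lemma join_irr : irreflexive e1 -> irreflexive e2 -> irreflexive J.
Proof. by move=> i1 i2 [a|a] /=. Qed.

Hypotheses (T1_gt0 : 0 < #|T1|) (T2_gt0 : 0 < #|T2|).

Lemma join_no_isolated : no_isolated J.
Proof.
case/card_gt0P: T1_gt0 => a0 _; case/card_gt0P: T2_gt0 => b0 _.
by case=> [a|b]; [exists (inr b0) | exists (inl a0)].
Qed.

Lemma join_gamma_le3 : gamma_tg J <= 3.
Proof.
case/card_gt0P: T1_gt0 => a0 _; case/card_gt0P: T2_gt0 => b0 _.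
apply: gval_le3; first by rewrite card_sum ltnS (leq_add T1_gt0 T2_gt0).
exists (inl a0); first by apply/existsP; exists (inr b0); rewrite inE.
by move=> y _; exists (inr b0) => -[w|w] /=; rewrite ?orbT.
Qed.

End Join.

Theorem theorem4p7 (T1 T2 : finType) (e1 : rel T1) (e2 : rel T2) :
  symmetric e1 -> irreflexive e1 -> symmetric e2 -> irreflexive e2 ->
  (0 < #|T1|)%N -> (0 < #|T2|)%N ->
  (crit3 (join_rel e1 e2) <->
   (crit3 e1 \/ is_K1_Kk e1) /\ (crit3 e2 \/ is_K1_Kk e2)).
Proof.
move=> s1 i1 s2 i2 n1 n2.
have J_gt0 : 0 < #|{: T1 + T2}| by rewrite card_sum addn_gt0 n1.
have Jsym := join_sym s1 s2; have Jirr := join_irr i1 i2.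
have Jnoiso := join_no_isolated e1 e2 n1 n2; have Jle3 := join_gamma_le3 e1 e2 n1 n2.
have := crit3_iff_core Jsym Jirr J_gt0 Jnoiso Jle3; have := crit3_core_join e1 e2.
have := crit3_core_iff s1 i1 n1; have := crit3_core_iff s2 i2 n2.
tauto.
Qed.
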